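(* Let $(V,b,\mu)$ be a locally finite, weighted, connected graph with $\mu(x)\geq\mu_0$ for all $x\in V$, for some constant $\mu_0>0$, and let $\theta$ be a phase function on it. Fix $x_0\in V$ and, for $n\in\mathbb{Z}_+$, let $\beta_n=\frac{d_{2n}p_{2n}}{\mu_0 n}$ and let $\chi_n$ be the cut-off function defined below. Then for every $u\in\ell^2(V,\mu)$, every $n\in\mathbb{Z}_+$ and every $0<\varepsilon<1$, $$\|\chi_n\Delta_{b,\theta}u\|^2\leq(1-\varepsilon)^{-1}\|\Delta_{b,\theta}(\chi_nu)\|^2+\left(\frac{9+4\varepsilon}{(1-\varepsilon)\varepsilon}\right)\beta_n^2\|u\|^2.$$
   Context: $V$ is a countably infinite set, $\mu\colon V\to(0,\infty)$, and $b\colon V\times V\to[0,\infty)$ satisfies $b(x,y)=b(y,x)$, $b(x,x)=0$, $\deg(x):=\#\{y: b(x,y)>0\}<\infty$; $x\sim y$ means $b(x,y)>0$; connectedness means any two vertices are joined by a finite path of neighbors, and $d(x,y)$ is the combinatorial (path-length) distance; $r(x)=d(x_0,x)$. A phase function is $\theta\colon V\times V\to[-\pi,\pi]$ with $\theta(x,y)=-\theta(y,x)$. $\ell^2(V,\mu)$ is the space of $f\colon V\to\mathbb{C}$ with $\|f\|^2=\sum_x\mu(x)|f(x)|^2<\infty$, inner product $(f,g)=\sum_x\mu(x)f(x)\overline{g(x)}$. The magnetic Laplacian is $(\Delta_{b,\theta}u)(x)=\frac{1}{\mu(x)}\sum_{y}b(x,y)(u(x)-e^{i\theta(x,y)}u(y))$.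 $B(x_0,n)=\{x: r(x)\leq n\}$ (plus edges between such vertices), $d_n=\max_{x\in B(x_0,n)}\deg(x)$, $p_n=\max_{x\in B(x_0,n)}\max_{y\in V}b(x,y)$. The cut-off is $\chi_n(x)=\left(\left(\frac{2n-d(x_0,x)}{n}\right)\vee 0\right)\wedge 1$, where $a\wedge z=\min\{a,z\}$, $a\vee z=\max\{a,z\}$. *)

From Stdlib Require Import Reals List ClassicalEpsilon.
From Coquelicot Require Import Coquelicot.
Open Scope R_scope.

Section Graph.
Variable V : Type.

Inductive walk (b : V -> V -> R) : nat -> V -> V -> Prop :=
| walk0 x : walk b 0 x x
| walkS n x y z : 0 < b x y -> walk b n y z -> walk b (S n) x z.

(* combinatorial distance: the least length of a walk (meaningful on a
   connected graph) *)
Definition dist (b : V -> V -> R) (x y : V) : nat :=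
  epsilon (inhabits 0%nat)
    (fun n => walk b n x y /\ forall m, walk b m x y -> (n <= m)%nat).

Definition connected (b : V -> V -> R) : Prop :=
  forall x y, exists n, walk b n x y.

Definition lsumR (l : list V) (f : V -> R) : R :=
  fold_right Rplus 0 (map f l).
Definition lsumC (l : list V) (f : V -> C) : C :=
  fold_right Cplus (RtoC 0) (map f l).

Definition cexpi (t : R) : C := (cos t, sin t).

(* magnetic Laplacian; nbr x is a duplicate-free list of the neighbours of x *)
Definition mag_lap (b : V -> V -> R) (mu : V -> R) (theta : V -> V -> R)
  (nbr : V -> list V) (u : V -> C) (x : V) : C :=
  Cmult (RtoC (/ mu x))
    (lsumC (nbr x) (fun y => Cmult (RtoC (b x y))
                              (Cminus (u x) (Cmult (cexpi (theta x y)) (u y))))).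

(* squared l^2(V,mu) norm: supremum of finite partial sums (in Rbar) *)
Definition l2norm2 (mu : V -> R) (f : V -> C) : Rbar :=
  Lub_Rbar (fun r => exists l : list V, NoDup l /\
                      r = lsumR l (fun x => mu x * (Cmod (f x)) ^ 2)).

(* d_n = max_{x in B(x0,n)} deg x, p_n = max_{x in B(x0,n)} max_y b(x,y) *)
Definition dmax (b : V -> V -> R) (nbr : V -> list V) (x0 : V) (n : nat) : R :=
  real (Lub_Rbar (fun r => exists x, (dist b x0 x <= n)%nat /\
                                     r = INR (length (nbr x)))).
Definition pmax (b : V -> V -> R) (x0 : V) (n : nat) : R :=
  real (Lub_Rbar (fun r => exists x y, (dist b x0 x <= n)%nat /\ r = b x y)).

Definition cutoff (b : V -> V -> R) (x0 : V) (n : nat) (x : V) : R :=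
  Rmin (Rmax ((2 * INR n - INR (dist b x0 x)) / INR n) 0) 1.

End Graph.

From Pilot Require Import Defs.
From Stdlib Require Import Reals List ClassicalEpsilon Classical Lra Lia.
From Coquelicot Require Import Coquelicot.
Open Scope R_scope.

(* Write chi * Lap u = Lap (chi * u) + K, where the commutator
   K x = mu(x)^-1 sum_y b(x,y) e^{i theta(x,y)} (chi y - chi x) u y
   collects the failure of the Leibniz rule; then (a + c)^2 <= a^2/(1-eps) + c^2/eps
   bounds |chi Lap u|^2 pointwise.  Along an edge chi changes by at most 1/n, and it
   vanishes at distance >= 2n, so only edges inside B(x0,2n) contribute to K, each by
   at most (p_{2n}/n)|u(y)|.  Cauchy-Schwarz over the <= d_{2n} neighbours of x and
   double counting of edges then give ||K||^2 <= beta_n^2 ||u||^2, and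
   1/eps <= (9 + 4 eps)/((1 - eps) eps). *)

Definition ind (P : Prop) : R := if excluded_middle_informative P then 1 else 0.

Lemma ind_true (P : Prop) : P -> ind P = 1.
Proof. intros H; unfold ind; destruct excluded_middle_informative; tauto. Qed.

Lemma ind_false (P : Prop) : ~ P -> ind P = 0.
Proof. intros H; unfold ind; destruct excluded_middle_informative; tauto. Qed.

Lemma ind_iff (P Q : Prop) : (P <-> Q) -> ind P = ind Q.
Proof. intros H; unfold ind; do 2 destruct excluded_middle_informative; tauto. Qed.

Lemma ind_bounds (P : Prop) : 0 <= ind P <= 1.
Proof. unfold ind; destruct excluded_middle_informative; lra. Qed.

Section FiniteSums.
Variable V : Type.
Implicit Types (l : list V) (f g : V -> R).

Lemma lsumR_nil f : lsumR V nil f = 0.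
Proof. reflexivity. Qed.

Lemma lsumR_cons a l f : lsumR V (a :: l) f = f a + lsumR V l f.
Proof. reflexivity. Qed.

Lemma lsumR_le l f g :
  (forall x, In x l -> f x <= g x) -> lsumR V l f <= lsumR V l g.
Proof.
  induction l as [|a l IH]; intros Hfg; rewrite ?lsumR_nil, ?lsumR_cons; [lra|].
  assert (f a <= g a) by (apply Hfg; left; reflexivity).
  assert (lsumR V l f <= lsumR V l g) by (apply IH; intros x Hx; apply Hfg; right; exact Hx).
  lra.
Qed.

Lemma lsumR_ext l f g :
  (forall x, In x l -> f x = g x) -> lsumR V l f = lsumR V l g.
Proof.
  intros Hfg; apply Rle_antisym; apply lsumR_le; intros x Hx; rewrite Hfg; auto; lra.
Qed.

Lemma lsumR_plus l f g :
  lsumR V l (fun x => f x + g x) = lsumR V l f + lsumR V l g.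
Proof. induction l as [|a l IH]; rewrite ?lsumR_nil, ?lsumR_cons; [lra|]. rewrite IH; lra. Qed.

Lemma lsumR_scal l c f : lsumR V l (fun x => c * f x) = c * lsumR V l f.
Proof. induction l as [|a l IH]; rewrite ?lsumR_nil, ?lsumR_cons; [lra|]. rewrite IH; lra. Qed.

Lemma lsumR_const1 l : lsumR V l (fun _ => 1) = INR (length l).
Proof.
  induction l as [|a l IH]; rewrite ?lsumR_nil, ?lsumR_cons; [reflexivity|].
  rewrite IH; simpl length; rewrite S_INR; lra.
Qed.

Lemma lsumR_nonneg l f : (forall x, In x l -> 0 <= f x) -> 0 <= lsumR V l f.
Proof.
  intros Hf. rewrite <- (Rmult_0_l (lsumR V l f)), <- lsumR_scal.
  apply lsumR_le. intros x Hx. rewrite Rmult_0_l. apply Hf, Hx.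
Qed.

Lemma lsumR_term_le l f a :
  (forall x, In x l -> 0 <= f x) -> In a l -> f a <= lsumR V l f.
Proof.
  induction l as [|c l IH]; intros Hf Ha; [destruct Ha|]. rewrite lsumR_cons.
  assert (Hf' : forall x, In x l -> 0 <= f x) by (intros x Hx; apply Hf; right; exact Hx).
  destruct Ha as [<-|Ha].
  - pose proof (lsumR_nonneg l f Hf'). lra.
  - pose proof (IH Hf' Ha). assert (0 <= f c) by (apply Hf; left; reflexivity). lra.
Qed.

Lemma lsumR_swap l1 l2 (h : V -> V -> R) :
  lsumR V l1 (fun x => lsumR V l2 (h x)) = lsumR V l2 (fun y => lsumR V l1 (fun x => h x y)).
Proof.
  induction l1 as [|a l1 IH]; rewrite ?lsumR_nil, ?lsumR_cons.
  - symmetry. rewrite <- (Rmult_0_l (lsumR V l2 (fun _ => 1))), <- lsumR_scal.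
    apply lsumR_ext. intros y _. rewrite lsumR_nil. ring.
  - rewrite IH, <- lsumR_plus. reflexivity.
Qed.

Lemma sqr_add_le (a s T k : R) : 0 <= k -> 0 <= T -> s * s <= k * T ->
  (a + s) * (a + s) <= (k + 1) * (a * a + T).
Proof.
  intros [Hk | <-] HT Hs.
  - apply Rmult_le_reg_l with k; [exact Hk|].
    pose proof (pow2_ge_0 (k * a - s)). nra.
  - assert (s = 0) by nra. subst s. nra.
Qed.

Lemma lsumR_Cauchy_Schwarz l f :
  lsumR V l f * lsumR V l f <= INR (length l) * lsumR V l (fun x => f x * f x).
Proof.
  induction l as [|a l IH]; rewrite ?lsumR_nil, ?lsumR_cons; [simpl; lra|].
  simpl length. rewrite S_INR. apply sqr_add_le; [apply pos_INR| |exact IH].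
  apply lsumR_nonneg; intros x _; nra.
Qed.

(* Removing one occurrence of [a] from [l2] lets the induction on [l1] go through. *)
Lemma lsumR_ind_In_le l1 l2 g :
  NoDup l1 -> (forall x, 0 <= g x) ->
  lsumR V l1 (fun x => ind (In x l2) * g x) <= lsumR V l2 g.
Proof.
  pose (deq := fun x y : V => excluded_middle_informative (x = y)).
  intros Hnd Hg. revert l2. induction Hnd as [|a l1 Ha Hnd IH]; intros l2.
  - apply lsumR_nonneg; auto.
  - rewrite lsumR_cons. destruct (classic (In a l2)) as [Hin|Hout].
    + rewrite ind_true by exact Hin.
      assert (Hrem : g a + lsumR V (remove deq a l2) g <= lsumR V l2 g).
      { clear -Hg Hin. induction l2 as [|c l2 IH2]; [destruct Hin|].
        simpl remove. destruct (deq a c) as [<-|Hne].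
        - rewrite lsumR_cons. apply Rplus_le_compat_l.
          clear IH2 Hin. induction l2 as [|c l2 IH3]; simpl remove; [simpl; lra|].
          destruct (deq a c); rewrite ?lsumR_cons; specialize (Hg c); lra.
        - destruct Hin as [->|Hin]; [congruence|]. rewrite !lsumR_cons.
          specialize (IH2 Hin). lra. }
      enough (lsumR V l1 (fun x => ind (In x l2) * g x) <=
              lsumR V (remove deq a l2) g) by lra.
      rewrite <- IH. right. apply lsumR_ext. intros x Hx.
      assert (x <> a) by (intros ->; contradiction).
      destruct (classic (In x l2)) as [Hx2|Hx2].
      * rewrite !ind_true; [reflexivity|apply in_in_remove|]; auto.
      * rewrite !ind_false; [reflexivity| |exact Hx2].
        intros Hrm; apply Hx2; eapply in_remove; exact Hrm.
    + rewrite ind_false by exact Hout. specialize (IH l2). lra.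
Qed.

End FiniteSums.

Section Graph.
Variables (V : Type) (b : V -> V -> R) (nbr : V -> list V).
Hypothesis b_sym : forall x y, b x y = b y x.
Hypothesis nbr_nodup : forall x, NoDup (nbr x).
Hypothesis nbr_spec : forall x y, In y (nbr x) <-> 0 < b x y.
Hypothesis b_conn : connected V b.

Definition in_ball (x0 : V) (k : nat) (z : V) : Prop := (Defs.dist V b x0 z <= k)%nat.

Lemma nbr_sym x y : In y (nbr x) <-> In x (nbr y).
Proof. rewrite !nbr_spec, b_sym. reflexivity. Qed.

Lemma walk_snoc m x y z : walk V b m x y -> 0 < b y z -> walk V b (S m) x z.
Proof.
  induction 1 as [x|m x w y Hxw Hw IH]; intros Hyz.
  - apply walkS with z; [exact Hyz|constructor].
  - apply walkS with w; [exact Hxw|exact (IH Hyz)].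
Qed.

Lemma dist_spec x y :
  walk V b (Defs.dist V b x y) x y /\
  forall m, walk V b m x y -> (Defs.dist V b x y <= m)%nat.
Proof.
  unfold Defs.dist. apply epsilon_spec.
  destruct (Wf_nat.dec_inh_nat_subset_has_unique_least_element (fun m => walk V b m x y)
    (fun m => classic _) (b_conn x y)) as [m [[Hm Hmin] _]].
  exists m; split; assumption.
Qed.

Lemma in_ball_center x0 k : in_ball x0 k x0.
Proof. unfold in_ball. pose proof (proj2 (dist_spec x0 x0) 0%nat (walk0 V b x0)). lia. Qed.

Lemma dist_neighbour_le x0 x y :
  0 < b x y -> (Defs.dist V b x0 y <= S (Defs.dist V b x0 x))%nat.
Proof.
  intros Hxy. apply (proj2 (dist_spec x0 y)).
  apply walk_snoc with x; [apply dist_spec|exact Hxy].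
Qed.

Fixpoint reach (k : nat) (x : V) : list V :=
  match k with
  | O => x :: nil
  | S k => x :: flat_map (reach k) (nbr x)
  end.

Lemma reach_walk m x z : walk V b m x z -> forall k, (m <= k)%nat -> In z (reach k x).
Proof.
  induction 1 as [x|m x y z Hxy Hw IH]; intros k Hk.
  - destruct k; left; reflexivity.
  - destruct k as [|k]; [lia|]. right. apply in_flat_map.
    exists y; split; [apply nbr_spec, Hxy|apply IH; lia].
Qed.

Lemma ball_enum x0 k : exists B, NoDup B /\ forall z, in_ball x0 k z -> In z B.
Proof.
  exists (nodup (fun x y : V => excluded_middle_informative (x = y)) (reach k x0)).
  split; [apply NoDup_nodup|].
  intros z Hz. apply nodup_In. apply reach_walk with (Defs.dist V b x0 z); [apply dist_spec|exact Hz].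
Qed.

Lemma Lub_Rbar_ge (E : R -> Prop) M r :
  (forall s, E s -> s <= M) -> E r -> r <= real (Lub_Rbar E).
Proof.
  intros HM Hr. destruct (Lub_Rbar_correct E) as [Hub Hlub].
  specialize (Hub r Hr).
  assert (Rbar_le (Lub_Rbar E) M) by (apply Hlub; intros s Hs; apply HM, Hs).
  destruct (Lub_Rbar E); simpl in *; tauto.
Qed.

Lemma dmax_ge x0 k x : in_ball x0 k x -> INR (length (nbr x)) <= dmax V b nbr x0 k.
Proof.
  intros Hx. destruct (ball_enum x0 k) as [B [_ HB]].
  apply Lub_Rbar_ge with (M := lsumR V B (fun z => INR (length (nbr z)))).
  - intros s [z [Hz ->]].
    apply (lsumR_term_le V B (fun z => INR (length (nbr z)))); [intros; apply pos_INR|apply HB, Hz].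
  - exists x; split; [exact Hx|reflexivity].
Qed.

Lemma dmax_nonneg x0 k : 0 <= dmax V b nbr x0 k.
Proof. eapply Rle_trans; [apply pos_INR|apply dmax_ge, in_ball_center]. Qed.

Lemma pmax_ge x0 k x y : in_ball x0 k x -> b x y <= pmax V b x0 k.
Proof.
  intros Hx. destruct (ball_enum x0 k) as [B [_ HB]].
  pose (row_sum := fun z => lsumR V (nbr z) (b z)).
  assert (row_nonneg : forall z, 0 <= row_sum z)
    by (intros z; apply lsumR_nonneg; intros w Hw; apply Rlt_le, nbr_spec, Hw).
  apply Lub_Rbar_ge with (M := lsumR V B row_sum).
  - intros s [z [w [Hz ->]]].
    destruct (Rlt_or_le 0 (b z w)) as [Hzw|Hzw].
    + apply Rle_trans with (row_sum z).
      * apply lsumR_term_le; [intros v Hv; apply Rlt_le, nbr_spec, Hv|apply nbr_spec, Hzw].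
      * apply lsumR_term_le; [intros; apply row_nonneg|apply HB, Hz].
    + apply Rle_trans with 0; [exact Hzw|apply lsumR_nonneg; intros; apply row_nonneg].
  - exists x, y; split; [exact Hx|reflexivity].
Qed.

Lemma clamp01_lipschitz a c :
  Rabs (Rmin (Rmax a 0) 1 - Rmin (Rmax c 0) 1) <= Rabs (a - c).
Proof.
  unfold Rmin, Rmax. repeat destruct Rle_dec; unfold Rabs; repeat destruct Rcase_abs; lra.
Qed.

Section Cutoff.
Variables (x0 : V) (n : nat).
Hypothesis n_pos : (0 < n)%nat.

Let n_posR : 0 < INR n.
Proof. apply lt_0_INR, n_pos. Qed.

Lemma cutoff_neighbour_lipschitz x y :
  0 < b x y -> Rabs (cutoff V b x0 n y - cutoff V b x0 n x) <= / INR n.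
Proof.
  intros Hxy. unfold cutoff. eapply Rle_trans; [apply clamp01_lipschitz|].
  assert (Hyx : 0 < b y x) by (rewrite b_sym; exact Hxy).
  pose proof (le_INR _ _ (dist_neighbour_le x0 x y Hxy)).
  pose proof (le_INR _ _ (dist_neighbour_le x0 y x Hyx)).
  rewrite S_INR in *.
  replace ((2 * INR n - INR (Defs.dist V b x0 y)) / INR n
           - (2 * INR n - INR (Defs.dist V b x0 x)) / INR n)
    with ((INR (Defs.dist V b x0 x) - INR (Defs.dist V b x0 y)) * / INR n) by (field; lra).
  rewrite Rabs_mult, (Rabs_pos_eq (/ INR n)) by (apply Rlt_le, Rinv_0_lt_compat, n_posR).
  rewrite <- (Rmult_1_l (/ INR n)) at 2.
  apply Rmult_le_compat_r; [apply Rlt_le, Rinv_0_lt_compat, n_posR|].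
  apply Rabs_le; lra.
Qed.

Lemma cutoff_eq0 x :
  (2 * n <= Defs.dist V b x0 x)%nat -> cutoff V b x0 n x = 0.
Proof.
  intros Hx. unfold cutoff.
  assert (2 * INR n <= INR (Defs.dist V b x0 x)).
  { replace 2 with (INR 2) by reflexivity. rewrite <- mult_INR. apply le_INR. lia. }
  assert ((2 * INR n - INR (Defs.dist V b x0 x)) / INR n <= 0).
  { unfold Rdiv. pose proof (Rinv_0_lt_compat _ n_posR). nra. }
  unfold Rmax, Rmin. repeat destruct Rle_dec; lra.
Qed.

Lemma cutoff_neighbour_diff x y :
  0 < b x y ->
  Rabs (cutoff V b x0 n y - cutoff V b x0 n x)
  <= ind (in_ball x0 (2 * n) x /\ in_ball x0 (2 * n) y) / INR n.
Proof.
  intros Hxy. destruct (classic (in_ball x0 (2 * n) x /\ in_ball x0 (2 * n) y)) as [Hin|Hout].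
  - rewrite ind_true by exact Hin. unfold Rdiv. rewrite Rmult_1_l.
    apply cutoff_neighbour_lipschitz, Hxy.
  - rewrite ind_false by exact Hout.
    assert (Hyx : 0 < b y x) by (rewrite b_sym; exact Hxy).
    pose proof (dist_neighbour_le x0 x y Hxy). pose proof (dist_neighbour_le x0 y x Hyx).
    apply not_and_or in Hout. unfold in_ball in Hout.
    rewrite !cutoff_eq0 by (destruct Hout; lia).
    unfold Rdiv. rewrite Rminus_0_r, Rabs_R0. lra.
Qed.

End Cutoff.

(* Each [y] is counted once for every neighbour [x] it has in [l], at most [deg y] times. *)
Lemma lsumR_neighbours_le (l B : list V) (g : V -> R) :
  NoDup l -> (forall y, 0 <= g y) -> (forall y, g y <> 0 -> In y B) ->
  lsumR V l (fun x => lsumR V (nbr x) g)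
  <= lsumR V B (fun y => INR (length (nbr y)) * g y).
Proof.
  intros Hl Hg HB.
  apply Rle_trans with (lsumR V l (fun x => lsumR V B (fun y => ind (In y (nbr x)) * g y))).
  { apply lsumR_le. intros x _.
    eapply Rle_trans; [|apply lsumR_ind_In_le; [apply nbr_nodup|]].
    - right. apply lsumR_ext. intros y Hy. rewrite (ind_true (In y (nbr x))) by exact Hy.
      destruct (Req_dec (g y) 0) as [->|Hy0]; [ring|].
      rewrite ind_true by (apply HB, Hy0). ring.
    - intros y. pose proof (ind_bounds (In y (nbr x))). pose proof (Hg y). nra. }
  rewrite lsumR_swap. apply lsumR_le. intros y _.
  rewrite <- lsumR_const1.
  apply Rle_trans with (g y * lsumR V l (fun x => ind (In x (nbr y)) * 1)).
  - right. rewrite <- lsumR_scal. apply lsumR_ext. intros x _.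
    rewrite (ind_iff (In y (nbr x)) (In x (nbr y))) by apply nbr_sym. ring.
  - rewrite Rmult_comm. apply Rmult_le_compat_r; [apply Hg|].
    apply lsumR_ind_In_le; [exact Hl|intros; lra].
Qed.

End Graph.

Section ComplexSums.
Variable V : Type.

Lemma lsumC_plus l (f g : V -> C) :
  lsumC V l (fun x => Cplus (f x) (g x)) = Cplus (lsumC V l f) (lsumC V l g).
Proof. induction l as [|a l IH]; unfold lsumC in *; simpl; [ring|]. rewrite IH. ring. Qed.

Lemma lsumC_scal l c (f : V -> C) :
  lsumC V l (fun x => Cmult c (f x)) = Cmult c (lsumC V l f).
Proof. induction l as [|a l IH]; unfold lsumC in *; simpl; [ring|]. rewrite IH. ring. Qed.

Lemma Cmod_lsumC_le l (f : V -> C) : Cmod (lsumC V l f) <= lsumR V l (fun x => Cmod (f x)).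
Proof.
  induction l as [|a l IH]; unfold lsumC, lsumR in *; simpl.
  - rewrite Cmod_0. lra.
  - eapply Rle_trans; [apply Cmod_triangle|]. lra.
Qed.

End ComplexSums.

Lemma Cmod_cexpi t : Cmod (cexpi t) = 1.
Proof.
  unfold cexpi, Cmod; simpl fst; simpl snd.
  replace (cos t ^ 2 + sin t ^ 2) with 1; [apply sqrt_1|].
  rewrite <- (sin2_cos2 t); unfold Rsqr; ring.
Qed.

Lemma sqr_add_le_weighted (a c e : R) : 0 < e < 1 ->
  (a + c) ^ 2 <= / (1 - e) * a ^ 2 + / e * c ^ 2.
Proof.
  intros He. assert (0 < e * (1 - e)) by nra.
  apply Rmult_le_reg_l with (e * (1 - e)); [assumption|].
  replace (e * (1 - e) * (/ (1 - e) * a ^ 2 + / e * c ^ 2))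
    with (e * a ^ 2 + (1 - e) * c ^ 2) by (field; lra).
  pose proof (pow2_ge_0 (e * a - (1 - e) * c)). nra.
Qed.

Section L2.
Variables (V : Type) (mu : V -> R).

Let l2sum (l : list V) (f : V -> C) : R := lsumR V l (fun x => mu x * Cmod (f x) ^ 2).

Lemma l2norm2_ge_lsumR (f : V -> C) l : NoDup l -> Rbar_le (l2sum l f) (l2norm2 V mu f).
Proof. intros Hl. apply (Lub_Rbar_correct _). exists l; split; [exact Hl|reflexivity]. Qed.

Lemma l2norm2_le (f : V -> C) (ub : Rbar) :
  (forall l, NoDup l -> Rbar_le (l2sum l f) ub) -> Rbar_le (l2norm2 V mu f) ub.
Proof. intros H. apply (Lub_Rbar_correct _). intros r [l [Hl ->]]. apply H, Hl. Qed.

Lemma lsumR_le_l2norm2 (f : V -> C) l :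
  is_finite (l2norm2 V mu f) -> NoDup l -> l2sum l f <= real (l2norm2 V mu f).
Proof.
  intros Hf Hl. pose proof (l2norm2_ge_lsumR f l Hl) as H. rewrite <- Hf in H. exact H.
Qed.

Lemma l2norm2_add_le (f g h : V -> C) (eps c : R) :
  (forall x, 0 < mu x) -> 0 < eps < 1 -> (forall x, f x = Cplus (g x) (h x)) ->
  (forall l, NoDup l -> l2sum l h <= c) ->
  Rbar_le (l2norm2 V mu f)
          (Rbar_plus (Rbar_mult (/ (1 - eps)) (l2norm2 V mu g)) (/ eps * c)).
Proof.
  intros mu_pos Heps Hfgh Hh.
  assert (Hsum : forall l, NoDup l -> l2sum l f <= / (1 - eps) * l2sum l g + / eps * c).
  { intros l Hl. unfold l2sum.
    apply Rle_trans with
      (lsumR V l (fun x => / (1 - eps) * (mu x * Cmod (g x) ^ 2) + / eps * (mu x * Cmod (h x) ^ 2))).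
    - apply lsumR_le. intros x _. rewrite Hfgh.
      pose proof (Cmod_triangle (g x) (h x)).
      assert (Cmod (Cplus (g x) (h x)) ^ 2 <= (Cmod (g x) + Cmod (h x)) ^ 2)
        by (apply pow_incr; split; [apply Cmod_ge_0|assumption]).
      pose proof (sqr_add_le_weighted (Cmod (g x)) (Cmod (h x)) eps Heps).
      pose proof (mu_pos x). nra.
    - rewrite lsumR_plus, !lsumR_scal. apply Rplus_le_compat_l.
      apply Rmult_le_compat_l; [apply Rlt_le, Rinv_0_lt_compat; lra|apply Hh, Hl]. }
  assert (Hinv : 0 < / (1 - eps)) by (apply Rinv_0_lt_compat; lra).
  destruct (l2norm2 V mu g) as [G| |] eqn:EG.
  - apply l2norm2_le. intros l Hl. simpl.
    pose proof (l2norm2_ge_lsumR g l Hl) as Hg. rewrite EG in Hg. simpl in Hg.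
    pose proof (Hsum l Hl). nra.
  - replace (Rbar_mult (/ (1 - eps)) p_infty) with p_infty.
    + destruct (l2norm2 V mu f); exact I.
    + unfold Rbar_mult, Rbar_mult'. destruct Rle_dec as [Hle|]; [|lra].
      destruct Rle_lt_or_eq_dec; [reflexivity|lra].
  - pose proof (l2norm2_ge_lsumR g nil (NoDup_nil _)) as H. rewrite EG in H. destruct H.
Qed.

End L2.

Section MagneticLaplacian.
Variables (V : Type) (b : V -> V -> R) (mu : V -> R) (theta : V -> V -> R)
  (nbr : V -> list V).

Definition lap_commutator (chi : V -> R) (u : V -> C) (x : V) : C :=
  Cmult (RtoC (/ mu x))
    (lsumC V (nbr x) (fun y => Cmult (RtoC (b x y))
       (Cmult (cexpi (theta x y)) (Cmult (RtoC (chi y - chi x)) (u y))))).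

Lemma mag_lap_mult_cutoff (chi : V -> R) (u : V -> C) x :
  Cmult (RtoC (chi x)) (mag_lap V b mu theta nbr u x) =
  Cplus (mag_lap V b mu theta nbr (fun y => Cmult (RtoC (chi y)) (u y)) x)
        (lap_commutator chi u x).
Proof.
  unfold mag_lap, lap_commutator. rewrite <- !lsumC_scal, <- lsumC_plus.
  unfold lsumC. f_equal. apply map_ext. intros y. rewrite RtoC_minus. ring.
Qed.

Hypothesis b_sym : forall x y, b x y = b y x.
Hypothesis nbr_nodup : forall x, NoDup (nbr x).
Hypothesis nbr_spec : forall x y, In y (nbr x) <-> 0 < b x y.
Hypothesis b_conn : connected V b.
Variable mu0 : R.
Hypothesis mu0_pos : 0 < mu0.
Hypothesis mu_ge : forall x, mu0 <= mu x.
Variables (x0 : V) (n : nat) (u : V -> C).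
Hypothesis n_pos : (0 < n)%nat.

Local Notation chi := (cutoff V b x0 n).
Local Notation ball := (in_ball V b x0 (2 * n)).
Local Notation d := (dmax V b nbr x0 (2 * n)).
Local Notation p := (pmax V b x0 (2 * n)).
Local Notation K := (lap_commutator chi u).

Let mu_pos x : 0 < mu x.
Proof. specialize (mu_ge x). lra. Qed.

Let ball_weight_nonneg y : 0 <= ind (ball y) * (mu y * Cmod (u y) ^ 2).
Proof.
  apply Rmult_le_pos; [apply ind_bounds|].
  apply Rmult_le_pos; [apply Rlt_le, mu_pos|apply pow2_ge_0].
Qed.

Let n_posR : 0 < INR n.
Proof. apply lt_0_INR, n_pos. Qed.

Let commutator_const_nonneg : 0 <= (p / INR n) ^ 2 * d / mu0 ^ 2.
Proof.
  unfold Rdiv. apply Rmult_le_pos.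
  - apply Rmult_le_pos; [apply pow2_ge_0|apply (dmax_nonneg V b nbr nbr_spec b_conn)].
  - apply Rlt_le, Rinv_0_lt_compat, pow_lt, mu0_pos.
Qed.

Lemma commutator_term_le x y : In y (nbr x) ->
  Cmod (Cmult (RtoC (b x y))
          (Cmult (cexpi (theta x y)) (Cmult (RtoC (chi y - chi x)) (u y))))
  <= p / INR n * (ind (ball x /\ ball y) * Cmod (u y)).
Proof.
  intros Hy. apply nbr_spec in Hy.
  rewrite !Cmod_mult, !Cmod_R, Cmod_cexpi, (Rabs_pos_eq (b x y)) by lra.
  pose proof (cutoff_neighbour_diff V b b_sym b_conn x0 n n_pos x y Hy) as Hdiff.
  assert (Hbp : b x y * ind (ball x /\ ball y) <= p * ind (ball x /\ ball y)).
  { destruct (classic (ball x /\ ball y)) as [[Hx _]|Hout].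
    - apply Rmult_le_compat_r; [apply ind_bounds|].
      apply (pmax_ge V b nbr nbr_spec b_conn), Hx.
    - rewrite ind_false by exact Hout. lra. }
  assert (Hb_diff : b x y * Rabs (chi y - chi x) <= p * ind (ball x /\ ball y) / INR n).
  { apply Rle_trans with (b x y * (ind (ball x /\ ball y) / INR n)).
    - apply Rmult_le_compat_l; [lra|exact Hdiff].
    - unfold Rdiv. rewrite <- Rmult_assoc.
      apply Rmult_le_compat_r; [apply Rlt_le, Rinv_0_lt_compat, n_posR|exact Hbp]. }
  pose proof (Cmod_ge_0 (u y)).
  replace (p / INR n * (ind (ball x /\ ball y) * Cmod (u y)))
    with (p * ind (ball x /\ ball y) / INR n * Cmod (u y)) by (unfold Rdiv; ring).
  rewrite Rmult_1_l, <- Rmult_assoc. apply Rmult_le_compat_r; assumption.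
Qed.

Lemma Cmod_commutator_le x :
  Cmod (K x)
  <= / mu x * (p / INR n * lsumR V (nbr x) (fun y => ind (ball x /\ ball y) * Cmod (u y))).
Proof.
  unfold lap_commutator.
  rewrite Cmod_mult, Cmod_R, Rabs_pos_eq by (apply Rlt_le, Rinv_0_lt_compat, mu_pos).
  apply Rmult_le_compat_l; [apply Rlt_le, Rinv_0_lt_compat, mu_pos|].
  eapply Rle_trans; [apply Cmod_lsumC_le|]. rewrite <- lsumR_scal.
  apply lsumR_le. intros y Hy. apply commutator_term_le, Hy.
Qed.

Lemma ball_neighbour_sum_sqr_le x : ball x ->
  lsumR V (nbr x) (fun y => ind (ball y) * Cmod (u y))
  * lsumR V (nbr x) (fun y => ind (ball y) * Cmod (u y))
  <= d * (/ mu0 * lsumR V (nbr x) (fun y => ind (ball y) * (mu y * Cmod (u y) ^ 2))).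
Proof.
  intros Hx. eapply Rle_trans; [apply lsumR_Cauchy_Schwarz|].
  apply Rmult_le_compat.
  - apply pos_INR.
  - apply lsumR_nonneg. intros y _. apply Rle_0_sqr.
  - apply (dmax_ge V b nbr nbr_spec b_conn), Hx.
  - rewrite <- lsumR_scal. apply lsumR_le. intros y _.
    pose proof (ind_bounds (ball y)). pose proof (pow2_ge_0 (Cmod (u y))).
    assert (Hmu_y : 1 <= / mu0 * mu y).
    { apply Rmult_le_reg_l with mu0; [exact mu0_pos|].
      rewrite <- Rmult_assoc, Rinv_r by lra. specialize (mu_ge y). lra. }
    assert (0 <= ind (ball y) * Cmod (u y) ^ 2) by nra. nra.
Qed.

Lemma commutator_pointwise_le x :
  mu x * Cmod (K x) ^ 2
  <= (p / INR n) ^ 2 * d / mu0 ^ 2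
     * lsumR V (nbr x) (fun y => ind (ball y) * (mu y * Cmod (u y) ^ 2)).
Proof.
  pose proof (Cmod_commutator_le x) as HK.
  set (A := lsumR V (nbr x) (fun y => ind (ball x /\ ball y) * Cmod (u y))) in HK.
  set (T := lsumR V (nbr x) (fun y => ind (ball y) * (mu y * Cmod (u y) ^ 2))).
  assert (T_nonneg : 0 <= T)
    by (apply lsumR_nonneg; intros y _; apply ball_weight_nonneg).
  pose proof (Cmod_ge_0 (K x)) as HK0. pose proof (mu_pos x) as Hmu.
  destruct (classic (ball x)) as [Hx|Hx].
  - assert (HA : A * A <= d * (/ mu0 * T)).
    { replace A with (lsumR V (nbr x) (fun y => ind (ball y) * Cmod (u y))).
      - apply ball_neighbour_sum_sqr_le, Hx.
      - apply lsumR_ext. intros y _. f_equal. apply ind_iff. tauto. }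
    assert (Hsq : Cmod (K x) ^ 2 <= (/ mu x * (p / INR n * A)) ^ 2)
      by (apply pow_incr; split; assumption).
    assert (Hinv : / mu x <= / mu0) by (apply Rinv_le_contravar; [exact mu0_pos|apply mu_ge]).
    apply Rle_trans with (/ mu x * ((p / INR n) ^ 2 * (A * A))).
    { replace (/ mu x * ((p / INR n) ^ 2 * (A * A)))
        with (mu x * (/ mu x * (p / INR n * A)) ^ 2) by (field; lra).
      apply Rmult_le_compat_l; lra. }
    apply Rle_trans with (/ mu0 * ((p / INR n) ^ 2 * (d * (/ mu0 * T)))).
    { apply Rmult_le_compat.
      - apply Rlt_le, Rinv_0_lt_compat, Hmu.
      - apply Rmult_le_pos; [apply pow2_ge_0|apply Rle_0_sqr].
      - exact Hinv.
      - apply Rmult_le_compat_l; [apply pow2_ge_0|exact HA]. }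
    right. field. lra.
  - assert (HA0 : A = 0).
    { unfold A. rewrite <- (Rmult_0_l (lsumR V (nbr x) (fun _ => 0))), <- lsumR_scal.
      apply lsumR_ext. intros y _. rewrite ind_false by tauto. ring. }
    rewrite HA0, Rmult_0_r, Rmult_0_r in HK.
    replace (Cmod (K x)) with 0 by lra.
    pose proof commutator_const_nonneg. nra.
Qed.

Lemma commutator_l2sum_le l :
  is_finite (l2norm2 V mu u) -> NoDup l ->
  lsumR V l (fun x => mu x * Cmod (K x) ^ 2)
  <= (d * p / (mu0 * INR n)) ^ 2 * real (l2norm2 V mu u).
Proof.
  intros Hu Hl.
  destruct (ball_enum V b nbr nbr_spec b_conn x0 (2 * n)) as [B [HBnd HB]].
  set (f := fun y => ind (ball y) * (mu y * Cmod (u y) ^ 2)).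
  assert (f_nonneg : forall y, 0 <= f y) by apply ball_weight_nonneg.
  assert (d_nonneg : 0 <= d) by apply (dmax_nonneg V b nbr nbr_spec b_conn).
  apply Rle_trans with ((p / INR n) ^ 2 * d / mu0 ^ 2 * lsumR V l (fun x => lsumR V (nbr x) f)).
  { rewrite <- lsumR_scal. apply lsumR_le. intros x _. apply commutator_pointwise_le. }
  apply Rle_trans with ((p / INR n) ^ 2 * d / mu0 ^ 2 * (d * real (l2norm2 V mu u))).
  { apply Rmult_le_compat_l; [exact commutator_const_nonneg|].
    eapply Rle_trans.
    { apply (lsumR_neighbours_le V b nbr b_sym nbr_nodup nbr_spec l B f Hl f_nonneg).
      intros y Hy. apply HB. destruct (classic (ball y)) as [Hb|Hb]; [exact Hb|].
      exfalso. apply Hy. unfold f. rewrite ind_false by exact Hb. ring. }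
    apply Rle_trans with (d * lsumR V B (fun y => mu y * Cmod (u y) ^ 2)).
    - rewrite <- lsumR_scal. apply lsumR_le. intros y _. unfold f.
      assert (0 <= mu y * Cmod (u y) ^ 2)
        by (apply Rmult_le_pos; [apply Rlt_le, mu_pos|apply pow2_ge_0]).
      destruct (classic (ball y)) as [Hb|Hb].
      + rewrite ind_true, Rmult_1_l by exact Hb. apply Rmult_le_compat_r; [assumption|].
        apply (dmax_ge V b nbr nbr_spec b_conn), Hb.
      + rewrite ind_false, Rmult_0_l, Rmult_0_r by exact Hb. apply Rmult_le_pos; assumption.
    - apply Rmult_le_compat_l; [exact d_nonneg|]. apply lsumR_le_l2norm2; assumption. }
  right. field. lra.
Qed.

End MagneticLaplacian.

Theorem proposition5p3
  (V : Type)
  (Vcount : exists e : nat -> V,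
      (forall i j, e i = e j -> i = j) /\ (forall x, exists i, e i = x))
  (b : V -> V -> R)
  (b_sym : forall x y, b x y = b y x)
  (b_nonneg : forall x y, 0 <= b x y)
  (b_diag : forall x, b x x = 0)
  (nbr : V -> list V)
  (nbr_nodup : forall x, NoDup (nbr x))
  (nbr_spec : forall x y, In y (nbr x) <-> 0 < b x y)
  (b_conn : connected V b)
  (mu : V -> R) (mu0 : R)
  (mu0_pos : 0 < mu0)
  (mu_ge : forall x, mu0 <= mu x)
  (theta : V -> V -> R)
  (theta_range : forall x y, - PI <= theta x y <= PI)
  (theta_anti : forall x y, theta x y = - theta y x)
  (x0 : V)
  (u : V -> C)
  (u_l2 : is_finite (l2norm2 V mu u))
  (n : nat) (n_pos : (0 < n)%nat)
  (eps : R) (eps_pos : 0 < eps) (eps_lt1 : eps < 1) :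
  let Lap := mag_lap V b mu theta nbr in
  let chi := cutoff V b x0 n in
  let beta := dmax V b nbr x0 (2 * n) * pmax V b x0 (2 * n) / (mu0 * INR n) in
  Rbar_le
    (l2norm2 V mu (fun x => Cmult (RtoC (chi x)) (Lap u x)))
    (Rbar_plus
       (Rbar_mult (/ (1 - eps))
          (l2norm2 V mu (Lap (fun x => Cmult (RtoC (chi x)) (u x)))))
       ((9 + 4 * eps) / ((1 - eps) * eps) * beta ^ 2 * real (l2norm2 V mu u))).
Proof.
  intros Lap chi beta.
  assert (mu_pos : forall x, 0 < mu x) by (intros x; specialize (mu_ge x); lra).
  assert (S_nonneg : 0 <= real (l2norm2 V mu u))
    by (apply (lsumR_le_l2norm2 V mu u nil u_l2), NoDup_nil).
  assert (Hconst : / eps <= (9 + 4 * eps) / ((1 - eps) * eps)).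
  { replace ((9 + 4 * eps) / ((1 - eps) * eps))
      with (/ eps * ((9 + 4 * eps) / (1 - eps))) by (field; lra).
    rewrite <- (Rmult_1_r (/ eps)) at 1.
    apply Rmult_le_compat_l; [apply Rlt_le, Rinv_0_lt_compat, eps_pos|].
    apply Rmult_le_reg_r with (1 - eps); [lra|].
    unfold Rdiv. rewrite Rmult_assoc, Rinv_l by lra. lra. }
  apply Rbar_le_trans with
    (Rbar_plus (Rbar_mult (/ (1 - eps)) (l2norm2 V mu (Lap (fun x => Cmult (RtoC (chi x)) (u x)))))
               (/ eps * (beta ^ 2 * real (l2norm2 V mu u)))).
  - apply l2norm2_add_le with (h := lap_commutator V b mu theta nbr chi u).
    + exact mu_pos.
    + lra.
    + intros x. apply mag_lap_mult_cutoff.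
    + intros l Hl. apply commutator_l2sum_le; assumption.
  - apply Rbar_plus_le_compat; [apply Rbar_le_refl|]. cbn [Rbar_le].
    rewrite Rmult_assoc. apply Rmult_le_compat_r; [|exact Hconst].
    apply Rmult_le_pos; [apply pow2_ge_0|exact S_nonneg].
Qed.
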